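(* Let $k$ be algebraically closed of characteristic $p$, $C\subset\mathbb P^2$ the Fermat curve $X_1^{p+1}+X_2^{p+1}+X_3^{p+1}=0$, and $t=(t_1,t_2,t_3)^T$ representing a point of $C^0(k):=C(k)\setminus C(\mathbb F_{p^2})$. Then the $\mathbb F_{p^2}$-algebra $\mathrm{End}(t)=\{A\in\mathrm{Mat}_3(\mathbb F_{p^2}):A\cdot t\in k\cdot t\}$ is isomorphic to either $\mathbb F_{p^2}$ or $\mathbb F_{p^6}$. *)

From HB Require Import structures.
From mathcomp Require Import all_boot all_order all_algebra.
Set Implicit Arguments. Unset Strict Implicit. Unset Printing Implicit Defensive.
Import Order.TTheory GRing.Theory Num.Theory.
Local Open Scope ring_scope.

Definition inFq (k : fieldType) (q : nat) (x : k) : bool := x ^+ q == x.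

Definition mxOverFq (k : fieldType) (q m n : nat) (A : 'M[k]_(m, n)) : bool :=
  [forall i, forall j, inFq q (A i j)].

Definition on_fermat (k : fieldType) (p : nat) (t : 'cV[k]_3) : Prop :=
  \sum_(i < 3) t i 0 ^+ p.+1 = 0.

Definition Fq_rational (k : fieldType) (q : nat) (t : 'cV[k]_3) : Prop :=
  exists u : 'cV[k]_3, [/\ u != 0, mxOverFq q u & exists l : k, u = l *: t].

Definition End_t (k : fieldType) (p : nat) (t : 'cV[k]_3) (A : 'M[k]_3) : Prop :=
  mxOverFq (p ^ 2) A /\ exists c : k, A *m t = c *: t.

From HB Require Import structures.
From mathcomp Require Import all_boot all_order all_algebra.
From mathcomp Require Import ring.
Import Order.TTheory GRing.Theory Num.Theory.
Local Open Scope ring_scope.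
Set Implicit Arguments. Unset Strict Implicit.

(* Let frob and sigma be the p- and p^2-Frobenius acting on coordinates.
   The Fermat equation says that frob t is orthogonal to t; together with the
   irrationality of [t] this shows that no F_{p^2}-rational line passes
   through [t].  Hence an element A of End(t) is determined by its eigenvalue
   c on t, and t, sigma t, sigma^2 t form a basis.  Writing
   sigma^3 t = a t + b sigma t + g sigma^2 t and applying A, which commutes
   with sigma, gives
   a (c - sigma^3 c) = b (sigma c - sigma^3 c) = g (sigma^2 c - sigma^3 c) = 0.
   If b or g is nonzero this forces c in F_{p^2}; otherwise sigma^3 t is a
   multiple of t, c lies in F_{p^6}, and every y in F_{p^6} is the eigenvalue
   of the matrix acting by y, sigma y, sigma^2 y on the basis. *)

Definition o0 : 'I_3 := @Ordinal 3 0 isT.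
Definition o1 : 'I_3 := @Ordinal 3 1 isT.
Definition o2 : 'I_3 := @Ordinal 3 2 isT.

Lemma ord3P (P : 'I_3 -> Prop) : P o0 -> P o1 -> P o2 -> forall i, P i.
Proof.
move=> P0 P1 P2 [[|[|[|//]]] i3].
- by rewrite (_ : Ordinal i3 = o0) //; apply: val_inj.
- by rewrite (_ : Ordinal i3 = o1) //; apply: val_inj.
- by rewrite (_ : Ordinal i3 = o2) //; apply: val_inj.
Qed.

Lemma big_ord3 (R : nmodType) (F : 'I_3 -> R) : \sum_(i < 3) F i = F o0 + F o1 + F o2.
Proof.
rewrite !big_ord_recl big_ord0 addr0 addrA; congr (F _ + F _ + F _); exact: val_inj.
Qed.

Lemma cV3P (T : Type) (x y : 'cV[T]_3) :
  x o0 0 = y o0 0 -> x o1 0 = y o1 0 -> x o2 0 = y o2 0 -> x = y.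
Proof. by move=> e0 e1 e2; apply/matrixP => i j; rewrite (ord1 j); elim/ord3P: i. Qed.

Section DotCross.
Variable R : comPzRingType.
Implicit Types a b x : 'cV[R]_3.

Definition dot a b := \sum_(i < 3) a i 0 * b i 0.

Definition cross a b : 'cV[R]_3 :=
  \col_(i < 3) [:: a o1 0 * b o2 0 - a o2 0 * b o1 0;
                   a o2 0 * b o0 0 - a o0 0 * b o2 0;
                   a o0 0 * b o1 0 - a o1 0 * b o0 0]`_i.

Lemma dotE a b : dot a b = a o0 0 * b o0 0 + a o1 0 * b o1 0 + a o2 0 * b o2 0.
Proof. exact: big_ord3. Qed.

Lemma dotC a b : dot a b = dot b a.
Proof. by rewrite !dotE; ring. Qed.

Lemma dotZl c a b : dot (c *: a) b = c * dot a b.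
Proof. by rewrite !dotE !mxE; ring. Qed.

Lemma dot_cross_cross a b x : cross (cross a b) x = dot a x *: b - dot b x *: a.
Proof. by apply: cV3P; rewrite !dotE !mxE /=; ring. Qed.

Lemma cross_eq0_minor a b : cross a b = 0 ->
  forall i j, a i 0 * b j 0 = a j 0 * b i 0.
Proof.
move=> /matrixP c0.
have e (l : 'I_3) : cross a b l 0 = 0 by rewrite c0 mxE.
move: (e o0) (e o1) (e o2); rewrite !mxE /= => /subr0_eq e0 /subr0_eq e1 /subr0_eq e2.
by elim/ord3P; elim/ord3P => //; first [exact: e0 | exact: e1 | exact: e2
  | exact: esym e0 | exact: esym e1 | exact: esym e2].
Qed.

End DotCross.

Lemma map_dot (R S : comPzRingType) (f : {rmorphism R -> S}) (a b : 'cV[R]_3) :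
  dot (map_mx f a) (map_mx f b) = f (dot a b).
Proof. by rewrite !dotE !mxE !rmorphD !rmorphM. Qed.

Lemma map_cross (R S : comPzRingType) (f : {rmorphism R -> S}) (a b : 'cV[R]_3) :
  cross (map_mx f a) (map_mx f b) = map_mx f (cross a b).
Proof. by apply: cV3P; rewrite !mxE /= rmorphB !rmorphM. Qed.

Section Colinear.
Variable F : fieldType.
Implicit Types a b w x y : 'cV[F]_3.

Lemma cross_eq0_colinear w x : w != 0 -> cross w x = 0 -> exists c, x = c *: w.
Proof.
move=> /cV0Pn [i wi0] /cross_eq0_minor minor; exists (x i 0 / w i 0).
apply/matrixP => j l; rewrite (ord1 l) mxE mulrAC.
by rewrite [x i 0 * _]mulrC -minor mulrC mulKf.
Qed.

Lemma orthogonal2_colinear a b x y :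
  cross a b != 0 -> y != 0 -> dot a x = 0 -> dot b x = 0 ->
  dot a y = 0 -> dot b y = 0 -> exists c, x = c *: y.
Proof.
move=> ab0 y0 ax bx ay by0.
have colinear_ab z : dot a z = 0 -> dot b z = 0 -> exists c, z = c *: cross a b.
  move=> az bz; apply: cross_eq0_colinear ab0 _.
  by rewrite dot_cross_cross az bz !scale0r subr0.
have [[cx ->] [cy ey]] := (colinear_ab x ax bx, colinear_ab y ay by0).
have cy0 : cy != 0 by apply: contraNneq y0 => cy0; rewrite ey cy0 scale0r.
by exists (cx / cy); rewrite ey scalerA divfK.
Qed.

End Colinear.

Section Eigenvalue.
Variables (k : fieldType) (p : nat) (t : 'cV[k]_3).
Hypothesis t_neq0 : t != 0.

Definition t_pivot : 'I_3 := odflt o0 [pick i | t i 0 != 0].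

Lemma t_pivot_neq0 : t t_pivot 0 != 0.
Proof.
rewrite /t_pivot; case: pickP => [i //| t0] /=.
by have /cV0Pn [i ti] := t_neq0; move: (t0 i); rewrite /= ti.
Qed.

Definition eigval (A : 'M[k]_3) := (A *m t) t_pivot 0 / t t_pivot 0.

Lemma eigvalE A c : A *m t = c *: t -> eigval A = c.
Proof. by move=> At; rewrite /eigval At mxE mulfK ?t_pivot_neq0. Qed.

Lemma eigvalD A B : End_t p t A -> End_t p t B -> eigval (A + B) = eigval A + eigval B.
Proof.
move=> [_ [a At]] [_ [b Bt]].
by rewrite (eigvalE At) (eigvalE Bt); apply: eigvalE; rewrite mulmxDl At Bt scalerDl.
Qed.

Lemma eigvalM A B : End_t p t A -> End_t p t B -> eigval (A *m B) = eigval A * eigval B.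
Proof.
move=> [_ [a At]] [_ [b Bt]].
rewrite (eigvalE At) (eigvalE Bt); apply: eigvalE.
by rewrite -mulmxA Bt -scalemxAr At scalerA mulrC.
Qed.

Lemma eigval_scalar c : eigval c%:M = c.
Proof. by apply: eigvalE; rewrite mul_scalar_mx. Qed.

End Eigenvalue.

Lemma closed_field_nth_root (k : closedFieldType) (m : nat) (y : k) :
  (0 < m)%N -> exists x : k, x ^+ m = y.
Proof.
move=> m0; have [x xE] := @solve_monicpoly k m (fun i => if i == 0%N then y else 0) m0.
exists x; rewrite xE (bigD1 (Ordinal m0)) //= big1 ?addr0 ?expr0 ?mulr1 //.
by move=> i; rewrite -val_eqE /= => /negbTE ->; rewrite mul0r.
Qed.

Section Frobenius.
Variables (k : closedFieldType) (p : nat) (hchar : p \in [pchar k]).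
Local Notation frob := (pFrobenius_aut hchar).

Definition frob2 : {rmorphism k -> k} := (frob \o frob)%FUN.

Lemma frob2E x : frob2 x = x ^+ (p ^ 2).
Proof. by rewrite /= !pFrobenius_autE -exprM expnS expn1. Qed.

Lemma iter_frob2E n x : iter n frob2 x = x ^+ (p ^ (2 * n)).
Proof.
elim: n => [|n IH]; first by rewrite muln0 expn0 expr1.
by rewrite iterS IH frob2E -exprM -expnD mulnS addnC.
Qed.

Lemma frob_surj y : exists x, frob x = y.
Proof.
have [x <-] := closed_field_nth_root y (prime_gt0 (pcharf_prime hchar)).
by exists x; rewrite pFrobenius_autE.
Qed.

Lemma frob2_surj y : exists x, frob2 x = y.
Proof. by have [z <-] := frob_surj y; have [x <-] := frob_surj z; exists x. Qed.

Lemma mxOverFq_frob2 m n (A : 'M[k]_(m, n)) :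
  mxOverFq (p ^ 2) A <-> map_mx frob2 A = A.
Proof.
split=> [/forallP fixA | fixA].
  by apply/matrixP => i j; rewrite mxE frob2E; move/forallP: (fixA i) => /(_ j) /eqP.
apply/forallP => i; apply/forallP => j; apply/eqP.
by rewrite -frob2E; move/matrixP: fixA => /(_ i j); rewrite mxE.
Qed.

(* Hilbert 90 for the cyclic group generated by [frob2]: the scalar [nu] is a
   (p^2 - 1)-th root of [mu^-1]. *)
Lemma frob2_eigenvector_rescale m n (x : 'M[k]_(m, n)) mu :
  x != 0 -> map_mx frob2 x = mu *: x ->
  exists2 nu, nu != 0 & map_mx frob2 (nu *: x) = nu *: x.
Proof.
move=> x0 fx.
have mu0 : mu != 0.
  by apply: contraNneq x0 => mu0; rewrite -(map_mx_eq0 frob2) fx mu0 scale0r.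
have p_gt1 := prime_gt1 (pcharf_prime hchar).
have q_gt0 : (0 < (p ^ 2).-1)%N by rewrite ltn_predRL -(exp1n 2) ltn_exp2r.
have [nu nuE] := closed_field_nth_root mu^-1 q_gt0.
have nu0 : nu != 0.
  apply: contraTneq (invr_neq0 mu0) => nu0.
  by rewrite -nuE nu0 expr0n eqn0Ngt q_gt0 eqxx.
have p2_gt0 : (0 < p ^ 2)%N by rewrite expn_gt0 ltnW.
exists nu => //; rewrite map_mxZ fx scalerA frob2E -(prednK p2_gt0).
by rewrite exprS nuE mulfVK.
Qed.

Section FermatPoint.
Variable t : 'cV[k]_3.
Hypotheses (t_neq0 : t != 0) (t_fermat : on_fermat p t)
  (t_irrational : ~ Fq_rational (p ^ 2) t).
Local Notation sigma := (map_mx frob2).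

Lemma fixed_neq_multiple_t (u : 'cV[k]_3) l : u != 0 -> sigma u = u -> u <> l *: t.
Proof.
move=> u0 fu ut; apply: t_irrational; exists u; split => //; last by exists l.
exact/mxOverFq_frob2.
Qed.

Lemma frob2_t_not_colinear mu : sigma t <> mu *: t.
Proof.
move=> ft; have [nu nu0 fnut] := frob2_eigenvector_rescale t_neq0 ft.
have nut0 : nu *: t != 0 by rewrite scaler_eq0 negb_or nu0.
exact: (@fixed_neq_multiple_t (nu *: t) nu nut0 fnut).
Qed.

Lemma map_frob2 m n (A : 'M[k]_(m, n)) : sigma A = map_mx frob (map_mx frob A).
Proof. exact: map_mx_comp. Qed.

Lemma dot_frob_t : dot (map_mx frob t) t = 0.
Proof.
rewrite -[RHS]t_fermat; apply: eq_bigr => i _.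
by rewrite mxE pFrobenius_autE exprSr.
Qed.

Lemma dot_frob_t_frob2 : dot (map_mx frob t) (sigma t) = 0.
Proof. by rewrite map_frob2 map_dot dotC dot_frob_t rmorph0. Qed.

(* No F_{p^2}-rational line passes through [t]. *)
Lemma fixed_orthogonal_t_eq0 a : sigma a = a -> dot a t = 0 -> a = 0.
Proof.
move=> fa at0; apply/eqP/negP => /negP a0.
have at1 : dot a (sigma t) = 0 by rewrite -fa map_dot at0 rmorph0.
have [/(cross_eq0_colinear a0) [l tl] | au0] := eqVneq (cross a (map_mx frob t)) 0.
  have [mu frob_mu] := frob_surj l.
  have t_mu : t = mu *: map_mx frob a.
    by apply: (map_mx_inj (f := frob)); rewrite tl -frob_mu map_mxZ -map_frob2 fa.
  have fa0 : map_mx frob a != 0 by rewrite map_mx_eq0.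
  have mu0 : mu != 0 by apply: contraNneq t_neq0 => mu0; rewrite t_mu mu0 scale0r.
  apply: (@fixed_neq_multiple_t _ mu^-1 fa0).
    by rewrite -[in RHS]fa !map_frob2.
  by rewrite t_mu scalerA mulVf ?scale1r.
have [mu ft] := orthogonal2_colinear au0 t_neq0 at1 dot_frob_t_frob2 at0 dot_frob_t.
exact: frob2_t_not_colinear ft.
Qed.

Lemma fixed_mx_annihilating_t_eq0 (M : 'M[k]_3) : sigma M = M -> M *m t = 0 -> M = 0.
Proof.
move=> fM /matrixP Mt; apply/row_matrixP => i; rewrite row0; apply: trmx_inj.
rewrite trmx0; apply: fixed_orthogonal_t_eq0.
  by rewrite -map_trmx map_row fM.
by move: (Mt i 0); rewrite !mxE => <-; apply: eq_bigr => j _; rewrite !mxE.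
Qed.

Definition orbit n := iter n sigma t.

Definition orbit_mx : 'M[k]_3 := \matrix_(i, j) orbit j i 0.

Lemma orbitS n : orbit n.+1 = sigma (orbit n).
Proof. by []. Qed.

Lemma orbit_neq0 n : orbit n != 0.
Proof. by elim: n => [|n IH] //; rewrite orbitS map_mx_eq0. Qed.

Lemma orbit_mxE (v : 'cV[k]_3) : orbit_mx *m v = \sum_(i < 3) v i 0 *: orbit i.
Proof.
apply/matrixP => i j; rewrite (ord1 j) !mxE summxE.
by apply: eq_bigr => l _; rewrite !mxE mulrC.
Qed.

Lemma cross_t_frob2_neq0 : cross t (sigma t) != 0.
Proof.
apply/negP => /eqP /(cross_eq0_colinear t_neq0) [c ft].
exact: frob2_t_not_colinear ft.
Qed.

(* If [v] were orthogonal to the whole orbit, it would be proportional to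
   [frob t]; then [frob t] and [sigma (frob t)] would both be orthogonal to
   [sigma t] and [sigma^2 t], producing a rational line through [t]. *)
Lemma orbit_mx_unit : orbit_mx \in unitmx.
Proof.
rewrite unitmxE unitfE; apply/negP => /det0P [v v0 vT].
have v_orth (j : 'I_3) : dot (orbit j) v^T = 0.
  move/matrixP: vT => /(_ 0 j); rewrite !mxE => <-.
  by apply: eq_bigr => l _; rewrite !mxE mulrC.
set u := map_mx frob t.
have tu : dot t u = 0 by rewrite dotC dot_frob_t.
have t1u : dot (sigma t) u = 0 by rewrite dotC dot_frob_t_frob2.
have vT0 : v^T != 0 by rewrite trmx_eq0.
have [c uv] := orthogonal2_colinear cross_t_frob2_neq0 vT0 tu t1u (v_orth o0) (v_orth o1).
have t2u : dot (orbit 2) u = 0 by rewrite dotC uv dotZl dotC (v_orth o2) mulr0.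
have cross12 : cross (orbit 1) (orbit 2) != 0.
  by rewrite !orbitS map_cross map_mx_eq0 cross_t_frob2_neq0.
have u0 : u != 0 by rewrite map_mx_eq0.
have t1fu : dot (orbit 1) (sigma u) = 0 by rewrite map_dot tu rmorph0.
have t2fu : dot (orbit 2) (sigma u) = 0 by rewrite orbitS map_dot t1u rmorph0.
have [mu fu] := orthogonal2_colinear cross12 u0 t1fu t2fu t1u t2u.
have [nu nu0 fnu] := frob2_eigenvector_rescale u0 fu.
have nu_u_orth : dot (nu *: u) t = 0 by rewrite dotZl dot_frob_t mulr0.
have /eqP := fixed_orthogonal_t_eq0 fnu nu_u_orth.
by rewrite scaler_eq0 (negPf nu0) (negPf u0).
Qed.

Lemma orbit_mx_mul_eq0 (v : 'cV[k]_3) : orbit_mx *m v = 0 -> v = 0.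
Proof. by move/(congr1 (mulmx (invmx orbit_mx))); rewrite mulKmx ?orbit_mx_unit ?mulmx0. Qed.

Lemma orbit2_not_colinear c : orbit 2 <> c *: t.
Proof.
move=> o2t; pose v : 'cV[k]_3 := \col_i [:: c; 0; -1]`_i.
have /matrixP/(_ o2 0) : v = 0.
  apply: orbit_mx_mul_eq0; rewrite orbit_mxE big_ord3 o2t !mxE /=.
  by rewrite scale0r addr0 scaleN1r subrr.
by rewrite !mxE /= => /eqP; rewrite oppr_eq0 oner_eq0.
Qed.

Definition orbit3_coord := invmx orbit_mx *m orbit 3.

Lemma orbit3_decomp : orbit 3 = \sum_(i < 3) orbit3_coord i 0 *: orbit i.
Proof. by rewrite -orbit_mxE mulKVmx ?orbit_mx_unit. Qed.

Lemma End_tP A : End_t p t A <-> sigma A = A /\ exists c, A *m t = c *: t.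
Proof. by rewrite /End_t mxOverFq_frob2. Qed.

Lemma End_t_orbit_eigen A c : sigma A = A -> A *m t = c *: t ->
  forall n, A *m orbit n = iter n frob2 c *: orbit n.
Proof. by move=> fA At; elim=> [|n IH] //; rewrite orbitS -{1}fA -map_mxM IH map_mxZ. Qed.

Lemma End_t_eigen_relation A c : sigma A = A -> A *m t = c *: t ->
  forall i : 'I_3, orbit3_coord i 0 * (iter i frob2 c - iter 3 frob2 c) = 0.
Proof.
move=> fA At; have eig := End_t_orbit_eigen fA At.
pose r := \col_(i < 3) (orbit3_coord i 0 * (iter i frob2 c - iter 3 frob2 c)).
suff /matrixP r0 : r = 0 by move=> i; move: (r0 i 0); rewrite !mxE.
apply: orbit_mx_mul_eq0; rewrite orbit_mxE.
transitivity (A *m orbit 3 - iter 3 frob2 c *: orbit 3); last by rewrite eig subrr.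
rewrite {1 2}orbit3_decomp mulmx_sumr scaler_sumr -sumrB; apply: eq_bigr => i _.
by rewrite mxE -scalemxAr eig !scalerA -scalerBl mulrBr [iter 3 frob2 c * _]mulrC.
Qed.

Lemma eigval_inj A B : End_t p t A -> End_t p t B -> eigval t A = eigval t B -> A = B.
Proof.
move=> /End_tP [fA [a At]] /End_tP [fB [b Bt]].
rewrite (eigvalE t_neq0 At) (eigvalE t_neq0 Bt) => ab.
apply/subr0_eq/fixed_mx_annihilating_t_eq0; first by rewrite map_mxB fA fB.
by rewrite mulmxBl At Bt ab subrr.
Qed.

Lemma End_t_scalar c : inFq (p ^ 2) c -> End_t p t c%:M.
Proof.
move=> /eqP cE; apply/End_tP; split; last by exists c; rewrite mul_scalar_mx.
by rewrite map_scalar_mx frob2E cE.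
Qed.

Definition orbit3_colinear := (orbit3_coord o1 0 == 0) && (orbit3_coord o2 0 == 0).

Lemma orbit3_colinearE : orbit3_colinear -> orbit 3 = orbit3_coord o0 0 *: t.
Proof.
by case/andP => /eqP w1 /eqP w2; rewrite orbit3_decomp big_ord3 w1 w2 !scale0r !addr0.
Qed.

Lemma eigval_Fp2 A : ~~ orbit3_colinear -> End_t p t A -> inFq (p ^ 2) (eigval t A).
Proof.
move=> ncol /End_tP [fA [c At]]; rewrite (eigvalE t_neq0 At) /inFq -frob2E; apply/eqP.
have rel := End_t_eigen_relation fA At.
move: (rel o0) (rel o1) (rel o2); rewrite !iterS [iter 0 _ _]/= => rel0 rel1 rel2.
have frob2_eq := inj_eq (fmorph_inj frob2).
have [//|c_moved] := eqVneq (frob2 c) c; exfalso.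
(* Otherwise the relations kill the coordinates of sigma^3 t on t and
   sigma^2 t, so sigma^2 t would be a multiple of t. *)
have w2_0 : orbit3_coord o2 0 = 0.
  move/eqP: rel2; rewrite mulf_eq0 subr_eq0 !frob2_eq.
  by rewrite [c == _]eq_sym (negPf c_moved) orbF => /eqP.
have w1_neq0 : orbit3_coord o1 0 != 0.
  by move: ncol; rewrite /orbit3_colinear w2_0 eqxx andbT.
have c_frob2 : c = frob2 (frob2 c).
  by apply/eqP; move/eqP: rel1; rewrite mulf_eq0 subr_eq0 (negPf w1_neq0) frob2_eq.
have w0_0 : orbit3_coord o0 0 = 0.
  move/eqP: rel0; rewrite mulf_eq0 subr_eq0 -c_frob2.
  by rewrite [c == _]eq_sym (negPf c_moved) orbF => /eqP.
have [b frob2_b] := frob2_surj (orbit3_coord o1 0).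
apply: (@orbit2_not_colinear b); apply: (map_mx_inj (f := frob2)).
rewrite -orbitS orbit3_decomp big_ord3 w0_0 w2_0 !scale0r add0r addr0.
by rewrite map_mxZ frob2_b.
Qed.

Lemma eigval_Fp6 A : orbit3_colinear -> End_t p t A -> inFq (p ^ (2 * 3)) (eigval t A).
Proof.
move=> col /End_tP [fA [c At]]; rewrite (eigvalE t_neq0 At) /inFq -iter_frob2E eq_sym.
have w0_neq0 : orbit3_coord o0 0 != 0.
  by apply: contraNneq (orbit_neq0 3) => w0; rewrite orbit3_colinearE // w0 scale0r.
by have /eqP := End_t_eigen_relation fA At o0; rewrite mulf_eq0 (negPf w0_neq0) subr_eq0.
Qed.

Lemma End_t_Fp6_surj y : orbit3_colinear -> inFq (p ^ (2 * 3)) y ->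
  exists2 A, End_t p t A & eigval t A = y.
Proof.
move=> col; rewrite /inFq -iter_frob2E => /eqP yE.
pose e n := iter n frob2 y.
pose A := orbit_mx *m diag_mx (\row_(j < 3) e j) *m invmx orbit_mx.
have A_orbit (j : 'I_3) : A *m orbit j = e j *: orbit j.
  apply/matrixP => i z; rewrite (ord1 z); transitivity ((A *m orbit_mx) i j).
    by rewrite !mxE; apply: eq_bigr => l _; rewrite !mxE.
  by rewrite mulmxKV ?orbit_mx_unit // mul_mx_diag !mxE mulrC.
have A_orbitS (j : 'I_3) : A *m orbit j.+1 = e j.+1 *: orbit j.+1.
  elim/ord3P: j; [exact: (A_orbit o1) | exact: (A_orbit o2) |].
  by rewrite orbit3_colinearE // -scalemxAr (A_orbit o0) !scalerA [e 3]yE mulrC.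
have fA_orbit : sigma A *m sigma orbit_mx = A *m sigma orbit_mx.
  rewrite -map_mxM mulmxKV ?orbit_mx_unit // map_mxM map_diag_mx mul_mx_diag.
  apply/matrixP => i j; transitivity ((A *m orbit j.+1) i 0); last first.
    by rewrite !mxE; apply: eq_bigr => l _; rewrite !mxE.
  by rewrite A_orbitS !mxE mulrC.
have fA : sigma A = A.
  have unit_f : sigma orbit_mx \in unitmx by rewrite map_unitmx orbit_mx_unit.
  by rewrite -(mulmxK unit_f (sigma A)) fA_orbit mulmxK.
exists A; last by apply: (eigvalE t_neq0); exact: (A_orbit o0).
by apply/End_tP; split => //; exists y; exact: (A_orbit o0).
Qed.

End FermatPoint.
End Frobenius.

Theorem lemma3p12 (k : closedFieldType) (p : nat) (hp : prime p)
  (hchar : p \in [pchar k]) (t : 'cV[k]_3) (ht0 : t != 0)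
  (hC : on_fermat p t) (hnr : ~ Fq_rational (p ^ 2) t) :
  exists (d : nat) (f : 'M[k]_3 -> k),
    (d = 1%N \/ d = 3%N) /\
    (forall A, End_t p t A -> inFq (p ^ (2 * d)) (f A)) /\
    (forall x : k, inFq (p ^ (2 * d)) x -> exists2 A, End_t p t A & f A = x) /\
    (forall A B, End_t p t A -> End_t p t B -> f A = f B -> A = B) /\
    (forall A B, End_t p t A -> End_t p t B -> f (A + B) = f A + f B) /\
    (forall A B, End_t p t A -> End_t p t B -> f (A *m B) = f A * f B) /\
    (forall c : k, inFq (p ^ 2) c -> f (c%:M) = c).
Proof.
suff [d [d13 [eig_img eig_surj]]] : exists d, (d = 1%N \/ d = 3%N) /\
    (forall A, End_t p t A -> inFq (p ^ (2 * d)) (eigval t A)) /\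
    (forall x, inFq (p ^ (2 * d)) x -> exists2 A, End_t p t A & eigval t A = x).
  exists d, (eigval t); do !split => //.
  - exact: eigval_inj.
  - exact: eigvalD.
  - exact: eigvalM.
  - by move=> c _; apply: eigval_scalar.
have [col | ncol] := boolP (orbit3_colinear hchar t).
- exists 3%N; split; first by right.
  by split=> [A | y]; [apply: eigval_Fp6 | apply: End_t_Fp6_surj].
- exists 1%N; split; first by left.
  split=> [A | c Fc]; first exact: eigval_Fp2.
  by exists c%:M; [apply: End_t_scalar | apply: eigval_scalar].
Qed.
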